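(* Let $a,b,c$ be indeterminates, and let $\{U_n(x)\}_{n\ge 0}$ be the Chebyshev polynomials of the second kind, defined by $\sum_{n=0}^{\infty} U_n(x)t^n = \frac{1}{1-2xt+t^2}$. Then, as formal power series in $t$, $$\sum_{n=0}^{\infty} U_n(a)U_n(b)U_n(c)\, t^n = \frac{N(t)}{D(t)},$$ where $$N(t)=1+(-4a^2-4b^2-4c^2+3)t^2+16abc\,t^3+(-4a^2-4b^2-4c^2+3)t^4+t^6,$$ and $$\begin{aligned}D(t)={}&t^8-8abc\,t^7+(16a^2b^2+16a^2c^2-8a^2+16b^2c^2-8b^2-8c^2+4)t^6\\ &+(-32a^3bc+40abc-32ab^3c-32abc^3)t^5\\ &+(16a^4+64a^2b^2c^2-16a^2+16b^4-16b^2+6+16c^4-16c^2)t^4\\ &+(-32a^3bc+40abc-32ab^3c-32abc^3)t^3\\ &+(16a^2b^2+16a^2c^2-8a^2+16b^2c^2-8b^2-8c^2+4)t^2-8abc\,t+1.\end{aligned}$$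
   Context: The identity is between formal power series in $t$ whose coefficients are polynomials in $a,b,c$; $U_n(x)$ is the polynomial in $x$ given as the coefficient of $t^n$ in $1/(1-2xt+t^2)$. *)

From HB Require Import structures.
From mathcomp Require Import all_boot all_order all_algebra.
From mathcomp Require Import ring zify.
From mathcomp Require mpoly.
Set Implicit Arguments. Unset Strict Implicit. Unset Printing Implicit Defensive.
Import Order.TTheory GRing.Theory Num.Theory.
Local Open Scope ring_scope.

(* Formal power series in t with coefficients in a commutative ring R are
   represented by their coefficient sequences  s : nat -> R ; polynomials in t
   are elements of {poly R}.  For polynomials N, D in t (D with constant term a
   unit, so D is invertible as a power series), the identity of formal power
   series  sum_n s n t^n = N / D  means  (sum_n s n t^n) * D = N, i.e.
   the Cauchy product of s with the coefficients of D equals the coefficients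
   of N in every degree. *)
Definition series_is_quotient (R : comNzRingType) (s : nat -> R) (N D : {poly R}) : Prop :=
  forall n : nat, \sum_(i < n.+1) s i * D`_(n - i) = N`_n.

Fixpoint chebU_pair (R : nzRingType) (n : nat) : {poly R} * {poly R} :=
  match n with
  | 0 => (1, 2%:R *: 'X)
  | m.+1 => let: (u, v) := chebU_pair R m in (v, 2%:R *: 'X * v - u)
  end.
Definition chebU (R : nzRingType) (n : nat) : {poly R} := (chebU_pair R n).1.

Lemma chebU0 (R : nzRingType) : chebU R 0 = 1. Proof. by []. Qed.
Lemma chebU1 (R : nzRingType) : chebU R 1 = 2%:R *: 'X. Proof. by []. Qed.
Lemma chebUSS (R : nzRingType) n :
  chebU R n.+2 = 2%:R *: 'X * chebU R n.+1 - chebU R n.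
Proof. by rewrite /chebU /=; case: (chebU_pair R n). Qed.

Lemma chebU_gf (R : comNzRingType) :
  series_is_quotient (fun n => chebU R n) 1 (1 - (2%:R *: 'X)%:P * 'X + 'X^2).
Proof.
move=> n.
have cD k : (1 - (2%:R *: 'X)%:P * 'X + 'X^2 : {poly {poly R}})`_k =
   (if k == 0%N then 1 else if k == 1%N then - (2%:R *: 'X) else if k == 2%N then 1 else 0).
  by rewrite coefD coefB coef1 coefCM coefX coefXn; case: k => [|[|[|k]]] /=;
     rewrite ?mulr0 ?mulr1 ?subr0 ?add0r ?addr0 ?sub0r.
case: n => [|[|n]].
- by rewrite big_ord1 cD /= mulr1 coef1.
- rewrite big_ord_recr big_ord1 /= !cD /= coef1 /=.
  rewrite chebU0 chebU1; ring.
rewrite big_ord_recr big_ord_recr /= big_ord_recr /=.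
rewrite big1 ?add0r; last first.
  move=> i _; rewrite cD; case: i => i /= Hi.
  have -> : (n.+2 - i == 0)%N = false by apply/negbTE; lia.
  have -> : (n.+2 - i == 1)%N = false by apply/negbTE; lia.
  have -> : (n.+2 - i == 2)%N = false by apply/negbTE; lia.
  by rewrite mulr0.
have -> : (n.+2 - n = 2)%N by lia.
have -> : (n.+2 - n.+1 = 1)%N by lia.
rewrite subnn !cD /= coef1 /= chebUSS; ring.
Qed.

From HB Require Import structures.
From mathcomp Require Import all_boot all_order all_algebra.
From mathcomp Require Import mpoly.
From mathcomp Require Import ring zify.
Import GRing.Theory.
Local Open Scope ring_scope.

Set Implicit Arguments. Unset Strict Implicit.

(* Write a = (α + α⁻¹)/2, b = (β + β⁻¹)/2, c = (γ + γ⁻¹)/2.  Every solution of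
   u (k+2) = 2a u (k+1) - u k is a combination of α^k and α^-k, so a product of
   three such solutions is a combination of the eight geometric sequences
   (α^±1 β^±1 γ^±1)^k.  It therefore satisfies the order-8 linear recurrence
   whose characteristic polynomial is the product of the T - α^±1 β^±1 γ^±1,
   which is the palindromic polynomial D.  As this recurrence holds for all
   initial values, it is a polynomial identity in a, b, c and the initial values,
   checked by [ring].  It kills every coefficient of degree >= 8 of
   (sum_n U_n(a) U_n(b) U_n(c) t^n) * D; the first eight are those of N. *)

Lemma series_is_quotient_recurrence (R : comNzRingType) (s : nat -> R)
    (N D : {poly R}) (d : nat) :
  (size D <= d.+1)%N -> (size N <= d)%N ->
  (forall n, (n < d)%N -> \sum_(i < n.+1) s i * D`_(n - i) = N`_n) ->
  (forall n, \sum_(j < d.+1) s (n + j)%N * D`_(d - j) = 0) ->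
  series_is_quotient s N D.
Proof.
move=> szD szN init rec n; have [/init // | le_dn] := ltnP n d.
rewrite -(subnK le_dn); set m := (n - d)%N.
rewrite nth_default; last by apply: leq_trans szN (leq_addl _ _).
rewrite -addnS big_split_ord /= big1 ?add0r.
  by under eq_bigr do rewrite subnDl; exact: rec.
move=> i _ /=; rewrite nth_default ?mulr0 //.
by apply: leq_trans szD _; have := ltn_ord i; lia.
Qed.

Section TripleProduct.
Variable R : comNzRingType.

Definition cheb_recurrent (x : R) (u : nat -> R) :=
  forall k, u k.+2 = 2 * x * u k.+1 - u k.

Lemma chebU_recurrent (x : R) : cheb_recurrent x (fun n => (chebU R n).[x]).
Proof. by move=> k; rewrite chebUSS hornerD hornerN hornerM hornerZ hornerX. Qed.

Variables a b c : R.

Definition triple_denom_coef (k : nat) : R :=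
  match k with
  | 0 | 8 => 1
  | 1 | 7 => - (8 * a * b * c)
  | 2 | 6 => 16 * a ^+ 2 * b ^+ 2 + 16 * a ^+ 2 * c ^+ 2 - 8 * a ^+ 2
             + 16 * b ^+ 2 * c ^+ 2 - 8 * b ^+ 2 - 8 * c ^+ 2 + 4
  | 3 | 5 => - 32 * a ^+ 3 * b * c + 40 * a * b * c - 32 * a * b ^+ 3 * c
             - 32 * a * b * c ^+ 3
  | 4 => 16 * a ^+ 4 + 64 * a ^+ 2 * b ^+ 2 * c ^+ 2 - 16 * a ^+ 2 + 16 * b ^+ 4
         - 16 * b ^+ 2 + 6 + 16 * c ^+ 4 - 16 * c ^+ 2
  | _ => 0
  end.

Definition triple_numer_coef (k : nat) : R :=
  match k with
  | 0 | 6 => 1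
  | 2 | 4 => - 4 * a ^+ 2 - 4 * b ^+ 2 - 4 * c ^+ 2 + 3
  | 3 => 16 * a * b * c
  | _ => 0
  end.

Definition triple_denom : {poly R} := \poly_(k < 9) triple_denom_coef k.
Definition triple_numer : {poly R} := \poly_(k < 7) triple_numer_coef k.

Variables u v w : nat -> R.
Hypotheses (u_rec : cheb_recurrent a u) (v_rec : cheb_recurrent b v)
  (w_rec : cheb_recurrent c w).

Lemma triple_product_recurrence n :
  \sum_(j < 9) u (n + j)%N * v (n + j)%N * w (n + j)%N * triple_denom`_(8 - j) = 0.
Proof.
rewrite !big_ord_recr big_ord0 /= !coef_poly /= !addnS addn0.
rewrite !u_rec !v_rec !w_rec; ring.
Qed.

Lemma triple_product_initial n :
  u 0 = 1 -> u 1 = 2 * a -> v 0 = 1 -> v 1 = 2 * b -> w 0 = 1 -> w 1 = 2 * c ->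
  (n < 8)%N ->
  \sum_(i < n.+1) u i * v i * w i * triple_denom`_(n - i) = triple_numer`_n.
Proof.
move=> u0 u1 v0 v1 w0 w1.
do 8 (case: n => [_|n]; first by
  rewrite !big_ord_recr big_ord0 /= !coef_poly /= ?u_rec ?v_rec ?w_rec
          ?u0 ?u1 ?v0 ?v1 ?w0 ?w1; ring).
by [].
Qed.

End TripleProduct.

Lemma chebU_triple_product_gf (R : comNzRingType) (a b c : R) :
  series_is_quotient
    (fun n => (chebU R n).[a] * (chebU R n).[b] * (chebU R n).[c])
    (triple_numer a b c) (triple_denom a b c).
Proof.
have [[ua ub] uc] := (chebU_recurrent a, chebU_recurrent b, chebU_recurrent c).
apply: (series_is_quotient_recurrence (d := 8)).
- exact: size_poly.
- exact: leq_trans (size_poly _ _) _.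
- move=> n; apply: (triple_product_initial ua ub uc);
    by rewrite //= ?hornerC ?hornerZ ?hornerX.
- by move=> n; apply: (triple_product_recurrence ua ub uc).
Qed.

Theorem mainTheorem1 :
  let a : {mpoly int[3]} := 'X_(inord 0) in
  let b : {mpoly int[3]} := 'X_(inord 1) in
  let c : {mpoly int[3]} := 'X_(inord 2) in
  let t : {poly {mpoly int[3]}} := 'X in
  let N : {poly {mpoly int[3]}} :=
    1
    + (- 4 * a ^+ 2 - 4 * b ^+ 2 - 4 * c ^+ 2 + 3)%:P * t ^+ 2
    + (16 * a * b * c)%:P * t ^+ 3
    + (- 4 * a ^+ 2 - 4 * b ^+ 2 - 4 * c ^+ 2 + 3)%:P * t ^+ 4
    + t ^+ 6 in
  let D : {poly {mpoly int[3]}} :=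
    t ^+ 8
    - (8 * a * b * c)%:P * t ^+ 7
    + (16 * a ^+ 2 * b ^+ 2 + 16 * a ^+ 2 * c ^+ 2 - 8 * a ^+ 2
       + 16 * b ^+ 2 * c ^+ 2 - 8 * b ^+ 2 - 8 * c ^+ 2 + 4)%:P * t ^+ 6
    + (- 32 * a ^+ 3 * b * c + 40 * a * b * c - 32 * a * b ^+ 3 * c
       - 32 * a * b * c ^+ 3)%:P * t ^+ 5
    + (16 * a ^+ 4 + 64 * a ^+ 2 * b ^+ 2 * c ^+ 2 - 16 * a ^+ 2 + 16 * b ^+ 4
       - 16 * b ^+ 2 + 6 + 16 * c ^+ 4 - 16 * c ^+ 2)%:P * t ^+ 4
    + (- 32 * a ^+ 3 * b * c + 40 * a * b * c - 32 * a * b ^+ 3 * c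
       - 32 * a * b * c ^+ 3)%:P * t ^+ 3
    + (16 * a ^+ 2 * b ^+ 2 + 16 * a ^+ 2 * c ^+ 2 - 8 * a ^+ 2
       + 16 * b ^+ 2 * c ^+ 2 - 8 * b ^+ 2 - 8 * c ^+ 2 + 4)%:P * t ^+ 2
    - (8 * a * b * c)%:P * t
    + 1 in
  series_is_quotient
    (fun n => (chebU _ n).[a] * (chebU _ n).[b] * (chebU _ n).[c]) N D.
Proof.
move=> a b c t N D.
have -> : D = triple_denom a b c.
  apply/polyP => k; rewrite coef_poly /D /t.
  rewrite !(coefD, coefB, coefN, coefCM, coefXn, coefX, coef1).
  by do 9 (case: k => [|k]; first by rewrite /=; ring); rewrite /=; ring.
have -> : N = triple_numer a b c.
  apply/polyP => k; rewrite coef_poly /N /t.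
  rewrite !(coefD, coefB, coefN, coefCM, coefXn, coefX, coef1).
  by do 7 (case: k => [|k]; first by rewrite /=; ring); rewrite /=; ring.
exact: chebU_triple_product_gf.
Qed.
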